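(* Let $\mathcal I$ be an ideal on $\omega$. Then (1) $\mathrm{non}(\mathcal I\text{-p},\mathcal I\text{-}\sigma\text{-u})=\mathfrak b_\sigma(\mathcal I)$; (2) $\mathrm{non}(\mathcal I\text{-p},\mathcal I\text{-qn})=\mathfrak b_s(\mathcal I)$; (3) $\mathrm{non}(\mathcal I\text{-qn},\mathcal I\text{-}\sigma\text{-u})=\mathrm{add}_\omega(\mathcal I)$.
   Context: An ideal on $\omega$ is a family $\mathcal I\subseteq\mathcal P(\omega)$ closed under finite unions and subsets, containing all finite sets, with $\omega\notin\mathcal I$. A real sequence $(a_n)$ is $\mathcal I$-convergent to $0$ if $\{n:|a_n|\ge\varepsilon\}\in\mathcal I$ for all $\varepsilon>0$. For a sequence $(f_n)$ of real functions on a set $X$: $\mathcal I$-p means $(f_n(x))$ is $\mathcal I$-convergent to $0$ for each $x$; $\mathcal I$-u means $\{n:\exists x\in X\,(|f_n(x)|\ge\varepsilon)\}\in\mathcal I$ for each $\varepsilon>0$; $\mathcal I$-$\sigma$-u means $X=\bigcup_{k\in\omega}X_k$ with $(f_n\restriction X_k)$ $\mathcal I$-u convergent to $0$ for each $k$; $\mathcal I$-qn means there is a sequence $(\varepsilon_n)$ of positive reals $\mathcal I$-convergent to $0$ with $\{n:|f_n(x)|\ge\varepsilon_n\}\in\mathcal I$ for each $x$. $\mathcal C(X)$ = continuous real functions on $X$. Normal space = Hausdorff space in which disjoint closed sets have disjoint open neighbourhoods. $(\alpha,\beta)$ is the class of normal spaces $X$ such that for all $(f_n)$ in $\mathcal C(X)$,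 $f_n\to0$ in sense $\alpha$ iff in sense $\beta$; $\mathrm{non}(\alpha,\beta)$ is the least cardinality of a normal space not in $(\alpha,\beta)$, or $\infty$ if none. Cardinals (with $\min\emptyset=\infty$): for ideals $\mathcal I,\mathcal J,\mathcal K$ on $\omega$, let $\widehat{\mathcal P}_{\mathcal I}$ be the set of sequences $(A_n)\in\mathcal I^\omega$ of pairwise disjoint sets, $\mathcal P_{\mathcal I}$ those in $\widehat{\mathcal P}_{\mathcal I}$ with $\bigcup_nA_n=\omega$, and $\mathcal M_{\mathcal I}$ the set of sequences $(E_k)\in\mathcal I^\omega$ with $E_k\subseteq E_{k+1}$ for all $k$. $\mathfrak b_s(\mathcal I,\mathcal J,\mathcal K)=\min\{|\mathcal E|:\mathcal E\subseteq\widehat{\mathcal P}_{\mathcal K}$ and for every $(A_n)\in\mathcal P_{\mathcal J}$ there is $(E_n)\in\mathcal E$ with $\bigcup_{n}(A_{n+1}\cap\bigcup_{i\le n}E_i)\notin\mathcal I\}$; $\mathfrak b_\sigma(\mathcal I,\mathcal J)=\min\{|\mathcal E|:\mathcal E\subseteq\mathcal M_{\mathcal I}$ and for every $(A_n)\in\mathcal M_{\mathcal J}$ there is $(E_n)\in\mathcal E$ with $E_n\not\subseteq A_n$ for infinitely many $n\}$; $\mathrm{add}_\omega(\mathcal I,\mathcal J)=\min\{|\mathcal A|:\mathcal A\subseteq\mathcal I$ and for every $(B_n)\in\mathcal J^\omega$ there is $A\in\mathcal A$ with $A\not\subseteq B_n$ for all $n\}$. $\mathfrak b_s(\mathcal I)=\mathfrak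 b_s(\mathcal I,\mathcal I,\mathcal I)$, $\mathfrak b_\sigma(\mathcal I)=\mathfrak b_\sigma(\mathcal I,\mathcal I)$, $\mathrm{add}_\omega(\mathcal I)=\mathrm{add}_\omega(\mathcal I,\mathcal I)$. *)

From HB Require Import structures.
From mathcomp Require Import all_boot all_order all_algebra.
From mathcomp Require Import all_classical all_reals all_analysis.
Set Implicit Arguments. Unset Strict Implicit. Unset Printing Implicit Defensive.
Import Order.TTheory GRing.Theory Num.Theory.
Import numFieldNormedType.Exports.
Local Open Scope classical_set_scope.
Local Open Scope ring_scope.

Definition ideal (I : set (set nat)) : Prop :=
  (forall A B, I A -> I B -> I (A `|` B)) /\
  (forall A B, B `<=` A -> I A -> I B) /\
  (forall A, finite_set A -> I A) /\
  ~ I [set: nat].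

Definition Iconv (R : realType) (I : set (set nat)) (a : nat -> R) : Prop :=
  forall eps : R, 0 < eps -> I [set n | eps <= `|a n|].

Definition Ip (R : realType) (I : set (set nat)) (X : Type) (f : nat -> X -> R) :=
  forall x, Iconv I (fun n => f n x).

Definition Iu_on (R : realType) (I : set (set nat)) (X : Type)
    (f : nat -> X -> R) (Y : set X) :=
  forall eps : R, 0 < eps -> I [set n | exists2 x, Y x & eps <= `|f n x|].

Definition Iu (R : realType) (I : set (set nat)) (X : Type) (f : nat -> X -> R) :=
  Iu_on I f [set: X].

Definition Isigmau (R : realType) (I : set (set nat)) (X : Type)
    (f : nat -> X -> R) :=
  exists Xk : nat -> set X, \bigcup_k Xk k = [set: X] /\
    forall k, Iu_on I f (Xk k).

Definition Iqn (R : realType) (I : set (set nat)) (X : Type) (f : nat -> X -> R) :=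
  exists e : nat -> R, (forall n, 0 < e n) /\ Iconv I e /\
    forall x, I [set n | e n <= `|f n x|].

Definition normal_sp (X : topologicalType) : Prop :=
  hausdorff_space X /\
  forall A B : set X, closed A -> closed B -> A `&` B = set0 ->
    exists U V : set X, [/\ open U, open V, A `<=` U, B `<=` V & U `&` V = set0].

Definition in_class (R : realType)
    (alpha beta : forall X : Type, (nat -> X -> R) -> Prop)
    (X : topologicalType) : Prop :=
  forall f : nat -> X -> R, (forall n, continuous (f n)) ->
    (alpha X f <-> beta X f).

(* normal spaces not in (alpha, beta): non(alpha,beta) is the least
   cardinality of such a space *)
Definition bad_space (R : realType)
    (alpha beta : forall X : Type, (nat -> X -> R) -> Prop)
    (X : topologicalType) : Prop :=
  normal_sp X /\ ~ in_class alpha beta X.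

Definition disj_seq (I : set (set nat)) (A : nat -> set nat) : Prop :=
  (forall n, I (A n)) /\ (forall n m, n <> m -> A n `&` A m = set0).
Definition part_seq (I : set (set nat)) (A : nat -> set nat) : Prop :=
  disj_seq I A /\ \bigcup_n A n = [set: nat].
Definition mon_seq (I : set (set nat)) (E : nat -> set nat) : Prop :=
  (forall k, I (E k)) /\ (forall k, E k `<=` E k.+1).

(* witnessing families for b_s(I,J,K), b_sigma(I,J), add_omega(I,J);
   each cardinal is the least size of a witnessing family *)
Definition bs_family (I J K : set (set nat)) (F : set (nat -> set nat)) :=
  (forall E, F E -> disj_seq K E) /\
  forall A, part_seq J A -> exists2 E, F E &
    ~ I (\bigcup_n (A n.+1 `&` \bigcup_(i in [set i | (i <= n)%N]) E i)).

Definition bsigma_family (I J : set (set nat)) (F : set (nat -> set nat)) :=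
  (forall E, F E -> mon_seq I E) /\
  forall A, mon_seq J A -> exists2 E, F E &
    infinite_set [set n | ~ (E n `<=` A n)].

Definition addomega_family (I J : set (set nat)) (F : set (set nat)) :=
  (forall A, F A -> I A) /\
  forall B : nat -> set nat, (forall n, J (B n)) -> exists2 A, F A &
    forall n, ~ (A `<=` B n).

(* "min{|X| : bad X} = min{|F| : wit F}" (with min of empty = infinity),
   expressed without a cardinal type: every member of one class is
   bounded below in cardinality by some member of the other, and
   conversely.  Since cardinals are well ordered this is exactly
   equality of the two minima (including the case both are infinity). *)
Definition min_card_eq (R : realType)
    (alpha beta : forall X : Type, (nat -> X -> R) -> Prop)
    (T : Type) (wit : set T -> Prop) : Prop :=
  (forall X : topologicalType, bad_space alpha beta X ->
     exists2 F : set T, wit F & (F #<= [set: X])%card) /\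
  (forall F : set T, wit F ->
     exists2 X : topologicalType, bad_space alpha beta X & ([set: X] #<= F)%card).

From mathcomp Require Import all_boot all_order all_algebra.
From mathcomp Require Import all_classical all_reals all_analysis.
Import Order.TTheory GRing.Theory Num.Theory.
Import numFieldNormedType.Exports.
Set Implicit Arguments.
Unset Strict Implicit.
Unset Printing Implicit Defensive.
Local Open Scope classical_set_scope.
Local Open Scope ring_scope.

(* For each pair, beta-convergence implies alpha-convergence of arbitrary,
   not necessarily continuous, sequences, so a normal space is bad exactly
   when it carries a continuous sequence converging in the sense alpha but not
   beta.  Such a sequence on X yields a witnessing family indexed by X: the
   sets {n | |f_n x| >= 1/(k+1)}, increasing in k; the level sets
   {n | 1/(k+1) <= |f_n x| < 1/k}, pairwise disjoint; or {n | |f_n x| >= eps_n}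
   for a control sequence (eps_n) of the quasi-normal convergence.
   Conversely, a witnessing family F, viewed as a discrete (hence normal)
   space on which every function is continuous, carries the sequence
   f_n(E) = 1/(k+1) for the first k with n in E_k, resp. the indicator of
   n in A, which converges in the sense alpha but not beta. *)

Section Ideal.
Variable I : set (set nat).
Hypothesis hI : ideal I.

Lemma ideal_sub A B : I A -> B `<=` A -> I B.
Proof. by case: hI => _ [sub _] IA BA; apply: sub BA IA. Qed.

Lemma ideal_setU A B : I A -> I B -> I (A `|` B).
Proof. by case: hI => + _; apply. Qed.

Lemma ideal_finite A : finite_set A -> I A.
Proof. by case: hI => _ [_ [+ _]]; apply. Qed.

Lemma ideal_bigcup_le (B : nat -> set nat) n :
  (forall k, (k <= n)%N -> I (B k)) ->
  I (\bigcup_(k in [set k | (k <= n)%N]) B k).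
Proof.
elim: n => [|n IHn] IB.
  apply: (ideal_sub (IB 0%N (leqnn 0))) => x [k /=].
  by rewrite leqn0 => /eqP ->.
have IBn : I (\bigcup_(k in [set k | (k <= n)%N]) B k).
  by apply: IHn => k kn; apply: IB; exact: leqW.
apply: (ideal_sub (ideal_setU IBn (IB n.+1 (leqnn _)))) => x [k /= + Bkx].
rewrite leq_eqVlt ltnS => /orP[/eqP kE|kn]; first by right; rewrite -kE.
by left; exists k.
Qed.

Lemma ideal_index_le (B : nat -> set nat) (h : nat -> nat) :
  (forall j, I (B j)) -> (forall m, B (h m) m) ->
  forall M, I [set m | (h m <= M)%N].
Proof.
move=> IB hB M; apply: (ideal_sub (ideal_bigcup_le (fun k _ => IB k))) => m hm.
by exists (h m); [exact: hm | exact: hB].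
Qed.

End Ideal.

Section Least.
Variable P : nat -> Prop.

Definition is_least (i : nat) := P i /\ forall j, (j < i)%N -> ~ P j.

Lemma is_least_exists m : P m -> exists i, is_least i.
Proof.
move=> Pm; have exP : exists n, `[< P n >] by exists m; apply/asboolP.
case: (ex_minnP exP) => i /asboolP Pi i_min; exists i; split=> // j ji /asboolP.
by move/i_min; rewrite leqNgt ji.
Qed.

Lemma is_least_le i k : is_least i -> P k -> (i <= k)%N.
Proof. by case=> _ i_min Pk; rewrite leqNgt; apply/negP => /i_min. Qed.

Lemma is_least_uniq i j : is_least i -> is_least j -> i = j.
Proof.
move=> li lj; apply/eqP.
by rewrite eqn_leq (is_least_le li lj.1) (is_least_le lj li.1).
Qed.

Definition first_index : nat := xget 0%N is_least.

Lemma first_indexP m : P m -> is_least first_index.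
Proof. by move=> /is_least_exists; apply: xgetPex. Qed.

Lemma first_index_eq i : is_least i -> first_index = i.
Proof. by move=> li; apply: (xget_unique _ li) => j /is_least_uniq; apply. Qed.

End Least.

Section InvSn.
Variable R : realType.

Definition invSn (k : nat) : R := k.+1%:R^-1.

Lemma invSn_gt0 k : 0 < invSn k.
Proof. by rewrite invr_gt0 ltr0n. Qed.

Lemma normr_invSn k : `|invSn k| = invSn k.
Proof. by rewrite ger0_norm // ltW // invSn_gt0. Qed.

Lemma ler_invSn k m : (invSn k <= invSn m) = (m <= k)%N.
Proof. by rewrite lef_pV2 ?posrE ?ltr0n // ler_nat ltnS. Qed.

Lemma ltr_invSn k m : (invSn k < invSn m) = (m < k)%N.
Proof. by rewrite ltf_pV2 ?posrE ?ltr0n // ltr_nat ltnS. Qed.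

Lemma invSn_lt (eps : R) : 0 < eps -> exists m, invSn m < eps.
Proof.
move=> eps_gt0; exists (Num.truncn eps^-1).
rewrite -[ltRHS]invrK ltf_pV2 ?posrE ?ltr0n ?invr_gt0 //.
exact: truncnS_gt.
Qed.

Lemma Iconv_invSn (I : set (set nat)) (h : nat -> nat) : ideal I ->
  (forall M, I [set m | (h m <= M)%N]) -> Iconv I (fun m => invSn (h m)).
Proof.
move=> hI Ih eps /invSn_lt[M ltM]; apply: (ideal_sub hI (Ih M)) => m /=.
by rewrite normr_invSn => /(lt_le_trans ltM); rewrite ltr_invSn => /ltnW.
Qed.

(* [level r i]: [r] lies in [[1/(i+1), 1/i)], or in [[1, +oo)] when [i = 0]. *)
Definition level (r : R) : nat -> Prop := is_least (fun i => invSn i <= r).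

Lemma level_exists r : 0 < r -> exists i, level r i.
Proof. by move=> /invSn_lt[m /ltW]; apply: is_least_exists. Qed.

Lemma level_invSn k : level (invSn k) k.
Proof. by split=> // j jk; rewrite ler_invSn leqNgt jk. Qed.

End InvSn.

Lemma finite_not_subP (A E : nat -> set nat) :
  finite_set [set n | ~ E n `<=` A n] <->
  exists k, forall n, (k <= n)%N -> E n `<=` A n.
Proof.
split=> [/finite_fsetP[X XE]|[k Ek]].
  exists (\max_(i <- finmap.enum_fset X) i).+1 => n; rewrite ltnNge => /negP nX.
  apply: contrapT => notEA; apply: nX.
  have : [set n | ~ E n `<=` A n] n by [].
  by rewrite XE => /= Xn; apply: leq_bigmax_seq.
apply: sub_finite_set (finite_II k) => n /= notEA; rewrite ltnNge.
by apply/negP => /Ek.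
Qed.

Definition above (R : realType) (X : Type) (f : nat -> X -> R) (x : X)
  (k : nat) : set nat := [set n | invSn R k <= `|f n x|].

Definition level_set (R : realType) (X : Type) (f : nat -> X -> R) (x : X)
  (i : nat) : set nat := [set n | level `|f n x| i].

(* The [m] lying in some [E i] with [i] smaller than the index of the piece
   of [A] containing [m]. *)
Definition staircase (A E : nat -> set nat) : set nat :=
  \bigcup_n (A n.+1 `&` \bigcup_(i in [set i | (i <= n)%N]) E i).

Section Convergence.
Variables (R : realType) (I : set (set nat)) (X : Type) (f : nat -> X -> R).
Hypothesis hI : ideal I.

Lemma Isigmau_Ip : Isigmau I f -> Ip I f.
Proof.
move=> [Xk [cover Xk_u]] x eps eps_gt0.
have [k _ Xk_x] : (\bigcup_k Xk k) x by rewrite cover.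
by apply: (ideal_sub hI (Xk_u k eps eps_gt0)) => n /= ?; exists x.
Qed.

Lemma Iqn_Ip : Iqn I f -> Ip I f.
Proof.
move=> [e [e_gt0 [e_conv e_dom]]] x eps eps_gt0.
apply: (ideal_sub hI (ideal_setU hI (e_conv eps eps_gt0) (e_dom x))).
move=> n /= le_f.
have [le_e|lt_e] := leP eps (e n); first by left; rewrite ger0_norm // ltW.
by right; apply: le_trans (ltW lt_e) le_f.
Qed.

(* [eps_m = 1/(h m + 1)], where [h m] is the first [j] such that [m <= j] or
   some [x] in [X_0, ..., X_j] has [|f_m x| >= 1/(j+2)]. *)
Lemma Isigmau_Iqn : Isigmau I f -> Iqn I f.
Proof.
move=> [Xk [cover Xk_u]].
pose B j := `I_j.+1 `|` \bigcup_(k in [set k | (k <= j)%N])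
  [set m | exists2 x, Xk k x & invSn R j.+1 <= `|f m x|].
have IB j : I (B j).
  apply: (ideal_setU hI); first exact/(ideal_finite hI)/finite_II.
  by apply: (ideal_bigcup_le hI) => k _; exact: Xk_u (invSn_gt0 _ _).
pose h m := first_index (B^~ m).
have h_least m : is_least (B^~ m) (h m).
  by apply: (@first_indexP _ m); left; exact: ltnSn.
have h_le := ideal_index_le hI IB (fun m => (h_least m).1).
exists (fun m => invSn R (h m)); split; first by move=> m; exact: invSn_gt0.
split; first exact: Iconv_invSn hI h_le.
move=> x; have [k _ Xk_x] : (\bigcup_k Xk k) x by rewrite cover.
apply: (ideal_sub hI (h_le k)) => m /= le_f.
rewrite leqNgt; apply/negP => lt_kh.
have h_gt0 : (0 < h m)%N by apply: leq_ltn_trans lt_kh.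
apply: (h_least m).2 (h m).-1 _ _; first by rewrite prednK.
right; exists k => /=; first by rewrite -ltnS prednK.
by exists x; rewrite // prednK.
Qed.

Lemma IsigmauP : Isigmau I f <->
  exists2 A, mon_seq I A &
    forall x, exists k, forall n, (k <= n)%N -> above f x n `<=` A n.
Proof.
split=> [[Xk [cover Xk_u]]|[A [IA _] A_dom]].
  pose A n := \bigcup_(k in [set k | (k <= n)%N])
    [set m | exists2 x, Xk k x & invSn R n <= `|f m x|].
  exists A.
    split=> [n|n m [k kn [x Xk_x le_f]]].
      by apply: (ideal_bigcup_le hI) => k _; exact: Xk_u (invSn_gt0 _ _).
    exists k; first exact: leqW.
    by exists x => //; apply: le_trans le_f; rewrite ler_invSn.
  move=> x; have [k _ Xk_x] : (\bigcup_k Xk k) x by rewrite cover.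
  by exists k => n kn m le_f; exists k => //; exists x.
exists (fun k => [set x | forall n, (k <= n)%N -> above f x n `<=` A n]); split.
  by apply/seteqP; split=> // x _; have [k ?] := A_dom x; exists k.
move=> k eps /invSn_lt[m lt_m].
apply: (ideal_sub hI (IA (maxn m k))) => n [x x_dom le_f].
apply: (x_dom _ (leq_maxr m k)); rewrite /above /=.
apply: le_trans (le_trans (ltW lt_m) le_f).
by rewrite ler_invSn leq_maxl.
Qed.

(* One way, partition by the level of [eps_m]; the other way, take
   [eps_m = 1/a] for [m] in the piece [A a] (and [eps_m = 1] on [A 0]). *)
Lemma IqnP : Iqn I f <->
  exists2 A, part_seq I A & forall x, I (staircase A (level_set f x)).
Proof.
split=> [[e [e_gt0 [e_conv e_dom]]]|[A [[IA _] A_cover] A_small]].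
  exists (fun n => [set m | level (e m) n]).
    split; first split.
    - move=> n; apply: (ideal_sub hI (e_conv _ (invSn_gt0 R n))).
      by move=> m [le_e _] /=; rewrite ger0_norm // ltW.
    - move=> i j ij; apply/seteqP; split=> // m [/= li lj].
      exact: ij (is_least_uniq li lj).
    - apply/seteqP; split=> // m _.
      by have [i ?] := level_exists (e_gt0 m); exists i.
  move=> x; apply: (ideal_sub hI (e_dom x)).
  move=> m [n _ [[_ /(_ n (ltnSn n)) /negP]]].
  rewrite -ltNge => lt_e [i /= i_n [le_f _]].
  by apply: ltW (lt_le_trans lt_e (le_trans _ le_f)); rewrite ler_invSn.
pose a m := first_index (A^~ m).
have a_mem m : A (a m) m.
  have [n _ Anm] : (\bigcup_n A n) m by rewrite A_cover.
  exact: (@first_indexP (A^~ m) n Anm).1.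
exists (fun m => invSn R (a m).-1); split; first by move=> m; exact: invSn_gt0.
split.
  apply: (Iconv_invSn hI) => M.
  apply: (ideal_sub hI (ideal_index_le hI IA a_mem M.+1)).
  by move=> m /=; rewrite -ltnS; apply: leq_trans (leqSpred _).
move=> x; apply: (ideal_sub hI (ideal_setU hI (IA 0%N) (A_small x))) => m /=.
case am: (a m) => [|n] /= le_f; first by left; rewrite -am.
right; have [i li] := level_exists (lt_le_trans (invSn_gt0 R n) le_f).
exists n => //; split; first by rewrite -am.
by exists i => //; exact: is_least_le li le_f.
Qed.

Lemma bsigma_family_above : Ip I f -> ~ Isigmau I f ->
  bsigma_family I I (range (above f)).
Proof.
move=> f_p not_su; split=> [_ [x _ <-]|A A_mon].
  split=> [k|k n]; first exact: f_p (invSn_gt0 R k).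
  by apply: le_trans; rewrite ler_invSn.
apply: contrapT => no_E; apply/not_su/IsigmauP; exists A => // x.
apply/finite_not_subP; apply: contrapT => inf.
by apply: no_E; exists (above f x) => //; exists x.
Qed.

Lemma bs_family_level_set : Ip I f -> ~ Iqn I f ->
  bs_family I I I (range (level_set f)).
Proof.
move=> f_p not_qn; split=> [_ [x _ <-]|A A_part].
  split=> [i|i j ij].
    by apply: (ideal_sub hI (f_p x _ (invSn_gt0 R i))) => n [].
  by apply/seteqP; split=> // n [/= li lj]; exact: ij (is_least_uniq li lj).
apply: contrapT => no_E; apply/not_qn/IqnP; exists A => // x.
by apply: contrapT => big; apply: no_E; exists (level_set f x) => //; exists x.
Qed.

Lemma addomega_family_of_Iqn : Iqn I f -> ~ Isigmau I f ->
  exists A : X -> set nat, addomega_family I I (range A).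
Proof.
move=> [e [e_gt0 [e_conv e_dom]]] not_su.
exists (fun x => [set n | e n <= `|f n x|]); split=> [_ [x _ <-] // | B IB].
apply: contrapT => no_A; apply: not_su.
exists (fun k => [set x | [set n | e n <= `|f n x|] `<=` B k]); split.
  apply/seteqP; split=> // x _; apply: contrapT => no_k.
  apply: no_A; exists [set n | e n <= `|f n x|]; first by exists x.
  by move=> k sub; apply: no_k; exists k.
move=> k eps eps_gt0.
apply: (ideal_sub hI (ideal_setU hI (IB k) (e_conv eps eps_gt0))).
move=> n [x x_k le_f].
have [le_e|lt_e] := leP (e n) `|f n x|; first by left; exact: x_k.
right; rewrite /= ger0_norm ?(ltW (e_gt0 n)) //.
exact: ltW (le_lt_trans le_f lt_e).
Qed.

End Convergence.

Lemma sub_nondecreasing (E : nat -> set nat) k m :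
  (forall n, E n `<=` E n.+1) -> (k <= m)%N -> E k `<=` E m.
Proof.
move=> Emon /subnK <-; elim: (m - k)%N => [|d IHd] //=.
by rewrite addSn; apply: subset_trans IHd (Emon _).
Qed.

Lemma disj_is_least (E : nat -> set nat) n i :
  (forall i j, i <> j -> E i `&` E j = set0) -> E i n -> is_least (E^~ n) i.
Proof.
move=> Edisj Ein; split=> // j ji Ejn.
have j_neq_i : j <> i by move=> jE; rewrite jE ltnn in ji.
by have : (E j `&` E i) n by []; rewrite Edisj.
Qed.

Section HitValue.
Variable R : realType.

Definition hit_value (E : nat -> set nat) (n : nat) : R :=
  if `[< exists k, E k n >] then invSn R (first_index (E^~ n)) else 0.

Lemma hit_value_least E n i : is_least (E^~ n) i -> hit_value E n = invSn R i.
Proof.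
move=> li; rewrite /hit_value asboolT ?(first_index_eq li) //.
by exists i; exact: li.1.
Qed.

Lemma hit_value_ge E n m :
  invSn R m <= `|hit_value E n| -> exists2 i, (i <= m)%N & E i n.
Proof.
rewrite /hit_value; case: asboolP => [[k Ekn]|_]; last first.
  by rewrite normr0 leNgt invSn_gt0.
rewrite normr_invSn ler_invSn => le_m; exists (first_index (E^~ n)) => //.
exact: (@first_indexP (E^~ n) k Ekn).1.
Qed.

Lemma Iconv_hit_value (I : set (set nat)) E :
  ideal I -> (forall k, I (E k)) -> Iconv I (hit_value E).
Proof.
move=> hI IE eps /invSn_lt[m lt_m].
apply: (ideal_sub hI (ideal_bigcup_le hI (fun k _ => IE k) (n := m))).
move=> n /= le_e.
by have [i i_m Ein] := hit_value_ge (ltW (lt_le_trans lt_m le_e)); exists i.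
Qed.

Lemma hit_value_above E k : (forall n, E n `<=` E n.+1) ->
  [set n | invSn R k <= `|hit_value E n|] = E k.
Proof.
move=> Emon; apply/seteqP; split=> n /=.
  by move=> /hit_value_ge[i ik]; apply: sub_nondecreasing Emon ik n.
move=> Ekn; have li := @first_indexP (E^~ n) k Ekn.
rewrite (hit_value_least li) normr_invSn ler_invSn; exact: is_least_le li Ekn.
Qed.

Lemma hit_value_level E i : (forall i j, i <> j -> E i `&` E j = set0) ->
  [set n | level `|hit_value E n| i] = E i.
Proof.
move=> Edisj; apply/seteqP; split=> n /=; last first.
  move=> Ein; rewrite (hit_value_least (disj_is_least Edisj Ein)) normr_invSn.
  exact: level_invSn.
move=> li; have [j _ Ejn] := hit_value_ge li.1.
move: li; rewrite (hit_value_least (disj_is_least Edisj Ejn)) normr_invSn => li.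
by rewrite (is_least_uniq li (level_invSn R j)).
Qed.

End HitValue.

Lemma discrete_continuous (X : discreteTopologicalType) (Y : topologicalType)
  (h : X -> Y) : continuous h.
Proof. by apply/continuousP => A _; exact: discrete_open. Qed.

Lemma discrete_normal (X : discreteTopologicalType) : normal_sp X.
Proof.
split; first exact: discrete_hausdorff.
by move=> A B _ _ AB; exists A, B; split => //; exact: discrete_open.
Qed.

Definition hit_seq (R : realType) (F : set (nat -> set nat)) : nat -> F -> R :=
  fun n E => hit_value R (val E) n.
Arguments hit_seq : clear implicits.

Definition indic_seq (R : realType) (F : set (set nat)) : nat -> F -> R :=
  fun n A => \1_(val A) n.
Arguments indic_seq : clear implicits.

Section UpperBounds.
Variables (R : realType) (I : set (set nat)).
Hypothesis hI : ideal I.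

Lemma bsigma_family_hit_seq F : bsigma_family I I F ->
  Ip I (hit_seq R F) /\ ~ Isigmau I (hit_seq R F).
Proof.
move=> [F_mon F_wit]; split=> [E|/(IsigmauP _ hI)[A A_mon A_dom]].
  exact: Iconv_hit_value hI (F_mon _ (set_valP E)).1.
have [E FE E_bad] := F_wit A A_mon.
have [k Ek] := A_dom (SigSub (mem_set FE)).
apply/E_bad/finite_not_subP; exists k => n kn.
by rewrite -(hit_value_above R n (F_mon E FE).2); exact: Ek kn.
Qed.

Lemma bs_family_hit_seq F : bs_family I I I F ->
  Ip I (hit_seq R F) /\ ~ Iqn I (hit_seq R F).
Proof.
move=> [F_disj F_wit]; split=> [E|/(IqnP _ hI)[A A_part A_small]].
  exact: Iconv_hit_value hI (F_disj _ (set_valP E)).1.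
have [E FE E_big] := F_wit A A_part; apply: E_big.
have -> : E = level_set (hit_seq R F) (SigSub (mem_set FE)).
  by apply/funext => i; rewrite -(hit_value_level R i (F_disj E FE).2).
exact: A_small.
Qed.

Lemma addomega_family_indic_seq F : addomega_family I I F ->
  Iqn I (indic_seq R F) /\ ~ Isigmau I (indic_seq R F).
Proof.
move=> [F_I F_wit]; split.
  exists (invSn R); split; first exact: invSn_gt0.
  split.
    apply: (Iconv_invSn (h := id) hI) => M; apply: (ideal_finite hI).
    by apply: sub_finite_set (finite_II M.+1) => m /=; rewrite ltnS.
  move=> A; apply: (ideal_sub hI (F_I _ (set_valP A))) => n /=.
  rewrite /indic_seq indicE; have [//|nA] := pselect (val A n).
  by rewrite memNset // normr0 leNgt invSn_gt0.
move=> [Xk [cover Xk_u]].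
have [A FA A_bad] := F_wit _ (fun k => Xk_u k 1 ltr01).
have [k _ Xk_A] : (\bigcup_k Xk k) (SigSub (mem_set FA)) by rewrite cover.
apply: (A_bad k) => n An; exists (SigSub (mem_set FA)) => //.
by rewrite /indic_seq indicE mem_set // normr1.
Qed.

End UpperBounds.

Lemma min_card_eq_discrete (R : realType)
    (alpha beta : forall X : Type, (nat -> X -> R) -> Prop)
    (T : choiceType) (wit : set T -> Prop) :
  (forall X (f : nat -> X -> R), beta X f -> alpha X f) ->
  (forall X (f : nat -> X -> R), alpha X f -> ~ beta X f ->
     exists g : X -> T, wit (range g)) ->
  (forall F, wit F -> exists f : nat -> F -> R, alpha F f /\ ~ beta F f) ->
  min_card_eq alpha beta wit.
Proof.
move=> beta_alpha lower upper; split=> [X [_ not_in]|F witF].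
  apply: contrapT => small; apply: not_in => f _.
  split=> [alpha_f|]; last exact: beta_alpha.
  apply: contrapT => not_beta; have [g wit_g] := lower X f alpha_f not_beta.
  by apply: small; exists (range g) => //; exact: card_image_le.
have [f [alpha_f not_beta]] := upper F witF.
exists (discrete_topology F); last by have /card_eqPle[] := card_setT F.
split; first exact: discrete_normal.
have f_cont n := @discrete_continuous (discrete_topology F) R (f n).
by move=> /(_ f f_cont)[/(_ alpha_f)].
Qed.

Theorem corollary4p7 (R : realType) (I : set (set nat)) :
  ideal I ->
  min_card_eq (@Ip R I) (@Isigmau R I) (bsigma_family I I) /\
  min_card_eq (@Ip R I) (@Iqn R I) (bs_family I I I) /\
  min_card_eq (@Iqn R I) (@Isigmau R I) (addomega_family I I).
Proof.
move=> hI; split; [|split]; apply: min_card_eq_discrete.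
- by move=> X f; exact: Isigmau_Ip.
- by move=> X f f_p not_su; exists (above f); exact: bsigma_family_above.
- by move=> F /(bsigma_family_hit_seq R hI); exists (hit_seq R F).
- by move=> X f; exact: Iqn_Ip.
- by move=> X f f_p not_qn; exists (level_set f); exact: bs_family_level_set.
- by move=> F /(bs_family_hit_seq R hI); exists (hit_seq R F).
- by move=> X f; exact: Isigmau_Iqn.
- by move=> X f; exact: addomega_family_of_Iqn.
- by move=> F /(addomega_family_indic_seq R hI); exists (indic_seq R F).
Qed.
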